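(* Let $M\in\mathbb R^{n\times n}$, $Q\in\mathbb R^{n\times d}$, $q\in\mathbb R^n$, and for $\epsilon\in\mathbb R$ let $S^\epsilon=\{Q\theta+q+\boldsymbol\epsilon:\theta\in\mathbb R^d\}$. For every complementary basis $B$, the set of $\epsilon\in\mathbb R$ such that $S^\epsilon\cap\mathcal C(B)\neq\emptyset$ but $S^\epsilon\cap\operatorname{int}\mathcal C(B)=\emptyset$ is finite.
   Context: $\boldsymbol\epsilon=(\epsilon,\epsilon^2,\dots,\epsilon^n)^T\in\mathbb R^n$ is the lexicographic perturbation vector. Let $A=[\,I\;\;-M\,]\in\mathbb R^{n\times 2n}$, columns indexed by $\{1,\dots,2n\}$; $A_{\cdot J}$ is the submatrix of columns indexed by $J$. Complementary index: $\bar i=i+n$ if $i\le n$, $\bar i=i-n$ if $i>n$. A set $J$ is complementary if $i\in J\Rightarrow\bar i\notin J$. A complementary basis is a complementary set $B$ with $|B|=n$ and $A_{\cdot B}$ invertible. Complementary cone: $\mathcal C(J)=\{A_{\cdot J}\lambda:\lambda\ge0\}$. *)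

From HB Require Import structures.
From mathcomp Require Import all_boot all_order all_algebra.
Set Implicit Arguments. Unset Strict Implicit. Unset Printing Implicit Defensive.
Import Order.TTheory GRing.Theory Num.Theory.
Local Open Scope ring_scope.

Section Defs.
Variable R : realFieldType.
Variable n : nat.

Definition Amat (M : 'M[R]_n) : 'M[R]_(n, n + n) := row_mx 1%:M (- M).

Definition cidx (i : 'I_(n + n)) : nat := if (i < n)%N then (i + n)%N else (i - n)%N.

Definition complementary (J : {set 'I_(n + n)}) : Prop :=
  forall i j : 'I_(n + n), i \in J -> nat_of_ord j = cidx i -> j \notin J.

(* A_{.J} for |J| = n: columns of A indexed by J in increasing order *)
Definition AsubJ (M : 'M[R]_n) (J : {set 'I_(n + n)}) : 'M[R]_n :=
  colsub (fun k : 'I_n => nth (lshift n k) (enum J) k) (Amat M).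

Definition compl_basis (M : 'M[R]_n) (B : {set 'I_(n + n)}) : Prop :=
  [/\ complementary B, #|B| = n & AsubJ M B \in unitmx].

(* complementary cone C(J) = { A_{.J} lambda : lambda >= 0 } *)
Definition in_cone (M : 'M[R]_n) (J : {set 'I_(n + n)}) (x : 'cV[R]_n) : Prop :=
  exists lam : 'cV[R]_(n + n),
    (forall j, 0 <= lam j 0) /\ (forall j, j \notin J -> lam j 0 = 0) /\
    x = Amat M *m lam.

Definition in_interior (P : 'cV[R]_n -> Prop) (x : 'cV[R]_n) : Prop :=
  exists r : R, 0 < r /\
    forall y : 'cV[R]_n, (forall i, `|y i 0 - x i 0| < r) -> P y.

(* lexicographic perturbation vector (eps, eps^2, ..., eps^n)^T *)
Definition epsvec (e : R) : 'cV[R]_n := \col_(i < n) e ^+ i.+1.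

End Defs.

(* Let A = A_{.B} be the (invertible) basis matrix, G = A^-1, and for a parameter
   theta and a level e write x = Q theta + q + eps(e) and c = G x for the
   coordinates of x in the basis B.  Then x lies in the cone C(B) iff c >= 0, and
   x lies in its interior as soon as c > 0.  Fix a level e at which some x is in
   C(B) while no x is interior, and let Z be the zero set of the coordinates c.
   By a theorem of the alternative, either some direction u makes (G Q u)_i = 1
   for all i in Z -- and then moving theta along u yields c > 0, impossible -- or
   some row w <> 0 supported on Z kills G Q.  In the latter case w G (q + eps(e))
   = w c = 0, a nonzero polynomial equation in e, so e is one of finitely many
   roots.  Collecting these finite root lists over all 2^n patterns Z proves the
   theorem. *)
From Stdlib Require Import Classical.
From HB Require Import structures.
From mathcomp Require Import all_boot all_order all_algebra.
Import Order.TTheory GRing.Theory Num.Theory.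
Local Open Scope ring_scope.

Lemma poly_roots_finite {D : idomainType} {p : {poly D}} :
  p != 0 -> exists s : seq D, forall x, root p x -> x \in s.
Proof.
elim: {p}(size p) {-2}p (leqnn (size p)) => [|m IHm] p size_p p_neq0.
  by move: p_neq0; rewrite -size_poly_eq0 -leqn0 size_p.
have [[x /factor_theorem [r def_p]] | no_root] :=
  classic (exists x, root p x); last first.
  by exists [::] => y p_y; case: no_root; exists y.
have r_neq0 : r != 0 by apply: contraNneq p_neq0 => r0; rewrite def_p r0 mul0r.
have [|s roots_r] := IHm r _ r_neq0.
  by move: size_p; rewrite def_p size_mul ?polyXsubC_eq0 // size_XsubC addn2.
exists (x :: s) => y; rewrite def_p rootM root_XsubC inE.
by case/orP=> [/roots_r -> | ->]; rewrite ?orbT.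
Qed.

Lemma solvable_or_dual_certificate {F : fieldType} {m d : nat}
    (P : 'M[F]_(m, d)) (Z : {set 'I_m}) :
  (exists u : 'cV[F]_d, forall i, i \in Z -> (P *m u) i 0 = 1) \/
  (exists w : 'rV[F]_m,
     [/\ w != 0, forall i, i \notin Z -> w 0 i = 0 & w *m P = 0]).
Proof.
pose b : 'rV[F]_m := \row_i (i \in Z)%:R.
pose X : 'M[F]_(d, m) := \matrix_(l, i) (P i l * b 0 i).
have [/submxP [u def_b] | b_notin] := boolP (b <= X)%MS.
  left; exists u^T => i iZ; rewrite mxE.
  have := congr1 (fun v : 'rV_m => v 0 i) def_b; rewrite !mxE iZ => /esym.
  apply: etrans; apply: eq_bigr => l _.
  by rewrite !mxE iZ mulr1 mulrC.
right; set Y := cokermx X.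
have XY : X *m Y = 0 by apply: mulmx_coker.
have [j bY_j] : exists j, (b *m Y) 0 j != 0.
  apply/existsP; apply: contraNT b_notin.
  rewrite negb_exists submxE => /forallP bY0.
  by apply/eqP/matrixP => x y; rewrite ord1 [RHS]mxE; apply/eqP/negPn/bY0.
exists (\row_i (b 0 i * Y i j)); split.
- apply: contraNneq bY_j => w0; rewrite mxE big1 // => i _.
  by have := congr1 (fun v : 'rV_m => v 0 i) w0; rewrite !mxE.
- by move=> i iZ; rewrite !mxE (negbTE iZ) mul0r.
- apply/matrixP => x l; rewrite ord1 [RHS]mxE -[RHS](_ : (X *m Y) l j = 0).
    by rewrite !mxE; apply: eq_bigr => i _; rewrite !mxE mulrC mulrA.
  by rewrite XY mxE.
Qed.

Section Ordered.
Context {R : realFieldType}.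

Lemma common_pos_lower_bound (I : finType) (a : I -> R) :
  (forall i, 0 < a i) -> exists t, 0 < t /\ forall i, t <= a i.
Proof.
move=> a_gt0; exists (\big[Num.min/1]_i a i); split.
  by apply: (big_ind (fun x => 0 < x)) => // x y x0 y0; rewrite lt_min x0.
by move=> i; rewrite (bigD1 i) //= ge_min lexx.
Qed.

Lemma small_step_lt {K c t : R} :
  0 <= K -> 0 < c -> 0 <= t -> t <= c / (K + 1) -> t * K < c.
Proof.
move=> K_ge0 c_gt0 t_ge0 t_le.
have K1_gt0 : 0 < K + 1 by rewrite ltr_wpDl.
apply: (le_lt_trans (ler_wpM2r K_ge0 t_le)).
by rewrite -{2}(divfK (lt0r_neq0 K1_gt0) c) ltr_pM2l ?divr_gt0 // ltrDl.
Qed.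

Lemma perturb_to_positive {m : nat} {c v : 'cV[R]_m} :
  (forall i, 0 <= c i 0) -> (forall i, c i 0 = 0 -> v i 0 = 1) ->
  exists t, 0 < t /\ forall i, 0 < c i 0 + t * v i 0.
Proof.
move=> c_ge0 v_on_zeros.
pose bound i := if c i 0 == 0 then 1 else c i 0 / (`|v i 0| + 1).
have [|t [t_gt0 t_le]] := @common_pos_lower_bound _ bound.
  move=> i; rewrite /bound; case: eqP => // /eqP ci_neq0.
  by rewrite divr_gt0 ?ltr_wpDl // lt_neqAle eq_sym ci_neq0 c_ge0.
exists t; split => // i; have := t_le i; rewrite /bound.
case: eqP => [ci0 _ | /eqP ci_neq0 t_le_i].
  by rewrite ci0 v_on_zeros // add0r mulr1.
have ci_gt0 : 0 < c i 0 by rewrite lt_neqAle eq_sym ci_neq0 c_ge0.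
have step := small_step_lt (normr_ge0 (v i 0)) ci_gt0 (ltW t_gt0) t_le_i.
apply: (@lt_le_trans _ _ (c i 0 - t * `|v i 0|)); first by rewrite subr_gt0.
by rewrite lerD2l -mulrN ler_pM2l //; apply: lerNnormlW.
Qed.

Lemma epsvec_roots_finite {m : nat} (a : R) {b : 'rV[R]_m} : b != 0 ->
  exists s : seq R, forall e, a + (b *m epsvec m e) 0 0 = 0 -> e \in s.
Proof.
move=> b_neq0.
pose p : {poly R} := a%:P + \sum_(k < m) b 0 k *: 'X^(k.+1).
have p_eval e : p.[e] = a + (b *m epsvec m e) 0 0.
  rewrite hornerD hornerC horner_sum mxE; congr (_ + _).
  by apply: eq_bigr => k _; rewrite hornerZ hornerXn mxE.
have [k bk_neq0] : exists k, b 0 k != 0.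
  apply/existsP; apply: contraNT b_neq0; rewrite negb_exists => /forallP b0.
  by apply/eqP/matrixP => x y; rewrite ord1 [RHS]mxE; apply/eqP/negPn.
have p_neq0 : p != 0.
  apply: contraNneq bk_neq0 => p0.
  have := congr1 (fun r : {poly R} => r`_k.+1) p0.
  rewrite coef0 coefD coefC add0r coef_sum => <-.
  rewrite (bigD1 k) //= coefZ coefXn eqxx mulr1 big1 ?addr0 // => j jk.
  have jk_nat : (nat_of_ord j == nat_of_ord k) = false := negbTE jk.
  by rewrite coefZ coefXn eqSS eq_sym jk_nat mulr0.
have [s roots_p] := poly_roots_finite p_neq0.
by exists s => e e_root; apply: roots_p; rewrite /root p_eval e_root.
Qed.

End Ordered.

Section ConeCoordinates.
Context {R : realFieldType} {n : nat} {M : 'M[R]_n} {B : {set 'I_(n + n)}}.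
Hypothesis card_B : #|B| = n.

Let basis_col (k : 'I_n) : 'I_(n + n) := nth (lshift n k) (enum B) k.

Lemma size_enum_basis : size (enum B) = n.
Proof. by rewrite -cardE card_B. Qed.

Lemma basis_col_in (k : 'I_n) : basis_col k \in B.
Proof. by rewrite -mem_enum mem_nth // size_enum_basis. Qed.

Lemma cone_basis_coords x : in_cone M B x ->
  exists mu : 'cV[R]_n, (forall k, 0 <= mu k 0) /\ x = AsubJ M B *m mu.
Proof.
move=> [lam [lam_ge0 [lam_supp ->]]].
exists (\col_k lam (basis_col k) 0); split=> [k|]; first by rewrite mxE.
apply/matrixP => i j; rewrite ord1 !mxE.
rewrite (bigID (mem B)) /= [X in _ + X]big1 ?addr0; last first.
  by move=> j0 /lam_supp ->; rewrite mulr0.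
rewrite -big_enum /= (big_nth (lshift n i)) size_enum_basis big_mkord.
apply: eq_bigr => k _; rewrite !mxE /basis_col.
by rewrite (set_nth_default (lshift n k)) // size_enum_basis.
Qed.

Lemma basis_coords_cone (mu : 'cV[R]_n) :
  (forall k, 0 <= mu k 0) -> in_cone M B (AsubJ M B *m mu).
Proof.
move=> mu_ge0.
exists (\col_j \sum_k (j == basis_col k)%:R * mu k 0); split; [|split].
- by move=> j; rewrite mxE sumr_ge0 // => k _; rewrite mulr_ge0.
- move=> j jB; rewrite mxE big1 // => k _.
  case: eqP => [def_j|]; last by rewrite mul0r.
  by move: jB; rewrite def_j basis_col_in.
apply/matrixP => i j; rewrite ord1 !mxE; symmetry.
under eq_bigr => j0 _ do rewrite [X in _ * X]mxE mulr_sumr.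
rewrite exchange_big /=; apply: eq_bigr => k _; rewrite [in RHS]mxE.
rewrite (bigD1 (basis_col k)) //= eqxx mul1r big1 ?addr0 //.
by move=> j0 /negbTE ->; rewrite mul0r mulr0.
Qed.

Hypothesis A_unit : AsubJ M B \in unitmx.

Lemma cone_coords_ge0 x i :
  in_cone M B x -> 0 <= (invmx (AsubJ M B) *m x) i 0.
Proof. by move=> /cone_basis_coords [mu [mu_ge0 ->]]; rewrite mulKmx. Qed.

(* Points with positive coordinates lie in the interior of C(B): coordinates
   depend continuously (linearly) on the point. *)
Lemma interior_of_pos_coords x :
  (forall i, 0 < (invmx (AsubJ M B) *m x) i 0) -> in_interior (in_cone M B) x.
Proof.
set G := invmx _; set c := G *m x => c_gt0.
pose K i := \sum_j `|G i j|.
have K_ge0 i : 0 <= K i by rewrite sumr_ge0.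
have [|t [t_gt0 t_le]] :=
  @common_pos_lower_bound _ _ (fun i => c i 0 / (K i + 1)).
  by move=> i; rewrite divr_gt0 ?ltr_wpDl.
exists t; split => // y near_y.
rewrite -(mulKVmx A_unit y); apply: basis_coords_cone => i.
have -> : G *m y = c + G *m (y - x) by rewrite mulmxBr addrC subrK.
have shift_small : `|(G *m (y - x)) i 0| < c i 0.
  apply: le_lt_trans _ (small_step_lt (K_ge0 i) (c_gt0 i) (ltW t_gt0) (t_le i)).
  rewrite mxE mulr_sumr (le_trans (ler_norm_sum _ _ _)) // ler_sum // => j _.
  by rewrite normrM mulrC ler_wpM2r // !mxE ltW // distrC.
rewrite mxE (le_trans _ (lerD (lexx _) (lerNnormlW (lexx _)))) // subr_ge0.
exact: ltW.
Qed.

End ConeCoordinates.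

Section Degenerate.
Context {R : realFieldType} {n d : nat}.
Variables (G : 'M[R]_n) (Q : 'M[R]_(n, d)) (q : 'cV[R]_n).
Hypothesis G_unit : G \in unitmx.

Definition coords (theta : 'cV[R]_d) (e : R) : 'cV[R]_n :=
  G *m (Q *m theta + q + epsvec n e).

Lemma coords_shift theta u t e :
  coords (theta + t *: u) e = coords theta e + t *: (G *m Q *m u).
Proof.
rewrite /coords -mulmxA scalemxAr -mulmxDr; congr (G *m _).
by rewrite mulmxDr -scalemxAr -!addrA; congr (_ + _); rewrite addrC addrA.
Qed.

Lemma degenerate_pattern_finite (Z : {set 'I_n}) :
  exists s : seq R, forall e theta,
    (forall i, 0 <= coords theta e i 0) ->
    (forall i, (coords theta e i 0 == 0) = (i \in Z)) ->
    ~ (exists theta', forall i, 0 < coords theta' e i 0) -> e \in s.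
Proof.
have [[u u_on_Z] | [w [w_neq0 w_supp wGQ0]]] :=
  solvable_or_dual_certificate (G *m Q) Z.
- exists [::] => e theta c_ge0 zeros_Z no_pos; exfalso; apply: no_pos.
  have v_on_zeros i : coords theta e i 0 = 0 -> (G *m Q *m u) i 0 = 1.
    by move=> ci0; apply: u_on_Z; rewrite -zeros_Z ci0.
  have [step [_ pos]] := perturb_to_positive c_ge0 v_on_zeros.
  by exists (theta + step *: u) => i; move: (pos i); rewrite coords_shift !mxE.
- have wG_neq0 : w *m G != 0.
    by apply: contraNneq w_neq0 => wG0; rewrite -(mulmxK G_unit w) wG0 mul0mx.
  have [s roots] := epsvec_roots_finite ((w *m G *m q) 0 0) wG_neq0.
  exists s => e theta _ zeros_Z _; apply: roots.
  have w_coords0 : (w *m coords theta e) 0 0 = 0.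
    rewrite mxE big1 // => i _; have [iZ | iZ] := boolP (i \in Z).
      by move: iZ; rewrite -zeros_Z => /eqP ->; rewrite mulr0.
    by rewrite w_supp ?mul0r.
  move: w_coords0; rewrite /coords !mulmxDr !mulmxA.
  by rewrite -(mulmxA w) wGQ0 mul0mx add0r mxE.
Qed.

End Degenerate.

Theorem mainTheorem9 (R : realFieldType) (n d : nat) (M : 'M[R]_n)
    (Q : 'M[R]_(n, d)) (q : 'cV[R]_n) (B : {set 'I_(n + n)}) :
  compl_basis M B ->
  exists s : seq R, forall e : R,
    (exists theta : 'cV[R]_d, in_cone M B (Q *m theta + q + epsvec n e)) ->
    ~ (exists theta : 'cV[R]_d,
         in_interior (in_cone M B) (Q *m theta + q + epsvec n e)) ->
    e \in s.
Proof.
move=> [_ card_B A_unit]; set G := invmx (AsubJ M B).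
have G_unit : G \in unitmx by rewrite unitmx_inv.
have [roots roots_spec] :=
  fin_all_exists (degenerate_pattern_finite G Q q G_unit).
exists (flatten [seq roots Z | Z <- enum [set: {set 'I_n}]]).
move=> e [theta in_C] not_interior.
pose Z := [set i | coords G Q q theta e i 0 == 0].
apply/flatten_mapP; exists Z; first by rewrite mem_enum in_setT.
apply: (roots_spec Z e theta) => [i | i | [theta' pos]].
- exact: cone_coords_ge0 card_B A_unit _ _ in_C.
- by rewrite inE.
- apply: not_interior; exists theta'.
  exact: interior_of_pos_coords card_B A_unit _ pos.
Qed.
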